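(* Let $I$ be an interpretation of bounded range, and let $\mathcal{C}$ be a class of (possibly colored) graphs of locally almost bounded degree. Then $I(\mathcal{C})=\{I(G):G\in\mathcal{C}\}$ is locally almost near-covered.
   Context: Graphs are finite, simple, and may be colored by unary predicates; graph-theoretic properties refer to the underlying graph. $N^G(v)$ is the set of neighbors of $v$; $N_r^G(v)$ is the closed $r$-neighborhood of $v$; $\mathrm{dist}_G$ is graph distance. A class $\mathcal{C}$ has locally almost bounded degree if there exist $f,d:\mathbb{N}\to\mathbb{N}$ such that for every $r$, every $G\in\mathcal{C}$ and every $v\in V(G)$, $N_r^G(v)$ contains at most $f(r)$ vertices of degree larger than $d(r)$ in $G$. An interpretation $I=(\psi,\delta)$ consists of first-order formulas $\psi(x,y)$, $\delta(x)$ in the signature of (colored) graphs, $\psi$ symmetric and irreflexive; $I(G)$ has vertex set $\{v:G\models\delta(v)\}$ and edges $uv$ ($u\ne v$) with $G\models\psi(u,v)$. $\psi$ has range $b$ if for all $G$ and $u,v$, $\mathrm{dist}_G(u,v)>b$ implies $G\not\models\psi(u,v)$; $I$ has bounded range if $\psi$ has range $b$ for some $b$. Two vertices are $k$-near-twins in $G$ if $|N^G(u)\,\Delta\,N^G(v)|\le k$. $G$ is $(k,m)$-near-covered if every set of pairwise non-$k$-near-twin vertices has size at most $m$. A class is locally almost near-covered if there exist $k,m:\mathbb{N}\to\mathbb{N}$ such that for every $r$, every graph $G$ in the class and every $v\in V(G)$, $G[N_r^G(v)]$ is $(k(r),m(r))$-near-covered. *)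

From mathcomp Require Import all_boot.
Set Implicit Arguments. Unset Strict Implicit. Unset Printing Implicit Defensive.

Fixpoint ball (T : finType) (e : rel T) (r : nat) (v : T) : {set T} :=
  match r with
  | 0 => [set v]
  | r'.+1 => let B := ball e r' v in B :|: [set u | [exists w in B, e w u]]
  end.

Definition nbh (T : finType) (e : rel T) (v : T) : {set T} := [set u | e v u].
Definition degree (T : finType) (e : rel T) (v : T) : nat := #|nbh e v|.

Definition nbh_in (T : finType) (e : rel T) (S : {set T}) (u : T) : {set T} :=
  [set w in S | e u w].

Definition near_twins (T : finType) (e : rel T) (S : {set T}) (k : nat) (u w : T) : bool :=
  #|(nbh_in e S u :\: nbh_in e S w) :|: (nbh_in e S w :\: nbh_in e S u)| <= k.

Definition near_covered (T : finType) (e : rel T) (S : {set T}) (k m : nat) : Prop :=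
  forall X : {set T}, X \subset S ->
    {in X &, forall u w, u != w -> ~~ near_twins e S k u w} -> #|X| <= m.

Record graph := Graph { gvert : finType; gadj : rel gvert }.

Definition loc_almost_near_covered (D : graph -> Prop) : Prop :=
  exists k m : nat -> nat, forall (r : nat) (H : graph), D H ->
    forall v : gvert H, near_covered (@gadj H) (ball (@gadj H) r v) (k r) (m r).

Record cgraph := CGraph {
  cvert : finType;
  cadj : rel cvert;
  cadj_sym : symmetric cadj;
  cadj_irr : irreflexive cadj;
  ccol : nat -> pred cvert }.

Definition loc_almost_bounded_degree (C : cgraph -> Prop) : Prop :=
  exists f d : nat -> nat, forall (r : nat) (G : cgraph), C G ->
    forall v : cvert G,
      #|[set u in ball (@cadj G) r v | d r < degree (@cadj G) u]| <= f r.

Inductive form :=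
| FEq  of nat & nat
| FAdj of nat & nat
| FCol of nat & nat          (* P_i(x) *)
| FNot of form
| FAnd of form & form
| FEx  of nat & form.

Fixpoint fv (phi : form) : seq nat :=
  match phi with
  | FEq x y | FAdj x y => [:: x; y]
  | FCol _ x => [:: x]
  | FNot p => fv p
  | FAnd p q => fv p ++ fv q
  | FEx x p => [seq y <- fv p | y != x]
  end.

Fixpoint sat (G : cgraph) (rho : nat -> cvert G) (phi : form) : bool :=
  match phi with
  | FEq x y => rho x == rho y
  | FAdj x y => cadj (rho x) (rho y)
  | FCol i x => @ccol G i (rho x)
  | FNot p => ~~ sat rho p
  | FAnd p q => sat rho p && sat rho q
  | FEx x p => [exists a : cvert G, sat (fun n => if n == x then a else rho n) p]
  end.

(* evaluation of psi(x,y) with x := variable 0, y := variable 1 *)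
Definition psi_at (psi : form) (G : cgraph) (u v : cvert G) : bool :=
  sat (fun n => if n == 1 then v else u) psi.
(* evaluation of delta(x) with x := variable 0 *)
Definition delta_at (delta : form) (G : cgraph) (u : cvert G) : bool :=
  sat (fun _ => u) delta.

Definition is_interpretation (psi delta : form) : Prop :=
  [/\ all (fun n => n < 2) (fv psi), all (fun n => n < 1) (fv delta),
      (forall (G : cgraph) (u v : cvert G), psi_at psi u v = psi_at psi v u) &
      (forall (G : cgraph) (u : cvert G), ~~ psi_at psi u u)].

Definition has_range (psi : form) (b : nat) : Prop :=
  forall (G : cgraph) (u v : cvert G), u \notin ball (@cadj G) b v -> ~~ psi_at psi u v.

Definition ivert (delta : form) (G : cgraph) : finType :=
  {u : cvert G | delta_at delta u}.
Definition iadj (psi delta : form) (G : cgraph) : rel (ivert delta G) :=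
  fun u v => (val u != val v) && psi_at psi (val u) (val v).
Definition interp_graph (psi delta : form) (G : cgraph) : graph :=
  Graph (@iadj psi delta G).

Definition interp_class (psi delta : form) (C : cgraph -> Prop) : graph -> Prop :=
  fun H => exists G, C G /\ H = interp_graph psi delta G.

From mathcomp Require Import all_boot zify.
Set Implicit Arguments. Unset Strict Implicit. Unset Printing Implicit Defensive.

(** Fix r and let H be the at most f(R) vertices of degree > d(R) in a large ball
    around v. In G - H every vertex of the r-ball of I(G) has a ball of radius
    T = 2 * 3^q + 1 (q the quantifier depth of psi) with at most (d+1)^T vertices,
    so the isomorphism type of its 3^q-ball in G - H, with colours, adjacency to H
    and distances to the centre, takes finitely many values. In a large set X of
    pairwise non-near-twins, some type class outside H contains two vertices x1, x2
    at distance > T in G - H. Exchanging their two isomorphic balls is an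
    Ehrenfeucht-Fraisse style partial automorphism, which shows psi(x1, w) <-> psi(x2, w)
    for every w outside both balls: each quantifier is handled inside one third of
    the current shell of radii, hence the radius 3^q. So x1 and x2 are near-twins. *)

Section Balls.
Variables (T : finType) (e : rel T).

Lemma ball0 v y : (y \in ball e 0 v) = (y == v).
Proof. by rewrite /= inE. Qed.

Lemma ballSP r v y :
  reflect (y \in ball e r v \/ exists2 w, w \in ball e r v & e w y) (y \in ball e r.+1 v).
Proof.
rewrite /= !inE; apply: (iffP orP) => [[->|/exists_inP[w]]|[->|[w]]]; auto.
- by right; exists w.
- by right; apply/exists_inP; exists w.
Qed.

Lemma ballS r v y : y \in ball e r v -> y \in ball e r.+1 v.
Proof. by move=> hy; apply/ballSP; left. Qed.

Lemma ball_step r v y z : y \in ball e r v -> e y z -> z \in ball e r.+1 v.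
Proof. by move=> hy hyz; apply/ballSP; right; exists y. Qed.

Lemma ball_center r v : v \in ball e r v.
Proof. by elim: r => [|r IH]; [rewrite ball0 | apply: ballS]. Qed.

Lemma ball_mono r s v y : r <= s -> y \in ball e r v -> y \in ball e s v.
Proof.
move=> /subnK <-; elim: (s - r) => [//|n IH] hy.
by rewrite addSn; apply/ballS/IH.
Qed.

Lemma ball_trans r s x y z :
  y \in ball e r x -> z \in ball e s y -> z \in ball e (r + s) x.
Proof.
move=> hy; elim: s z => [|s IH] z; first by rewrite ball0 addn0 => /eqP->.
rewrite addnS; case/ballSP => [/IH/ballS //|[w /IH hw hwz]].
exact: ball_step hw hwz.
Qed.

Lemma ball_sym r x y : symmetric e -> y \in ball e r x -> x \in ball e r y.
Proof.
move=> se; elim: r y => [|r IH] y; first by rewrite !ball0 eq_sym.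
case/ballSP => [/IH/ballS //|[w /IH hw hwy]].
have hw1 : w \in ball e 1 y by apply: (@ball_step 0 _ y); [exact: ball_center | rewrite se].
by rewrite -add1n; apply: ball_trans hw1 hw.
Qed.

Lemma ball_ind (P : T -> Prop) r v :
  P v -> (forall a b, P a -> e a b -> P b) -> forall y, y \in ball e r v -> P y.
Proof.
move=> Pv Pe; elim: r => [|r IH] y; first by rewrite ball0 => /eqP->.
by case/ballSP => [/IH //|[w /IH]]; apply: Pe.
Qed.

Lemma leq_card_bigcup (I : finType) (P : {pred I}) (F : I -> {set T}) :
  #|\bigcup_(i in P) F i| <= \sum_(i in P) #|F i|.
Proof.
elim/big_rec2: _ => [|i A n _ hA]; first by rewrite cards0.
exact: leq_trans (leq_card_setU _ _) (leq_add _ hA).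
Qed.

Lemma card_ball_le D r x :
  (forall y, y \in ball e r x -> degree e y <= D) -> #|ball e r x| <= D.+1 ^ r.
Proof.
elim: r => [|r IH] hD; first by rewrite cards1.
have hr : #|ball e r x| <= D.+1 ^ r by apply: IH => y /ballS; apply: hD.
have -> : ball e r.+1 x = ball e r x :|: \bigcup_(w in ball e r x) nbh e w.
  apply/setP => u; rewrite /= !inE; congr (_ || _).
  by apply/exists_inP/bigcupP => -[w hw hwu]; exists w; rewrite // inE in hwu *.
apply: leq_trans (leq_card_setU _ _) _.
apply: leq_trans (leq_add (leqnn _) (leq_card_bigcup _ _)) _.
have hsum : \sum_(w in ball e r x) #|nbh e w| <= #|ball e r x| * D.
  by rewrite -sum_nat_const; apply: leq_sum => w /ballS /hD.
rewrite expnS; nia.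
Qed.

End Balls.

Lemma sub_rel_ball (T : finType) (e e' : rel T) r v y :
  subrel e e' -> y \in ball e r v -> y \in ball e' r v.
Proof.
move=> ee'; elim: r y => [|r IH] y; first by rewrite !ball0.
by case/ballSP => [/IH/ballS //|[w /IH hw /ee']]; apply: ball_step.
Qed.

(* For monotone p: p does not switch on in the interval (s, t]. *)
Definition settled (p : pred nat) s t := p s || ~~ p t.

Lemma settled_pair_gap (p q : pred nat) a0 a1 a2 a3 :
  {homo p : s t / s <= t >-> s ==> t} -> {homo q : s t / s <= t >-> s ==> t} ->
  a0 <= a1 -> a1 <= a2 -> a2 <= a3 ->
  [|| settled p a0 a1 && settled q a0 a1, settled p a1 a2 && settled q a1 a2
    | settled p a2 a3 && settled q a2 a3].
Proof.
move=> mp mq h01 h12 h23; rewrite /settled.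
move: (mp _ _ h01) (mp _ _ h12) (mp _ _ h23) (mq _ _ h01) (mq _ _ h12) (mq _ _ h23).
by case: (p a0); case: (p a1); case: (p a2); case: (p a3);
   case: (q a0); case: (q a1); case: (q a2); case: (q a3).
Qed.

Definition adj_off (G : cgraph) (Hs : {set cvert G}) : rel (cvert G) :=
  fun a b => [&& cadj a b, a \notin Hs & b \notin Hs].

Definition hubs (G : cgraph) (R D : nat) (x0 : cvert G) : {set cvert G} :=
  [set u in ball (@cadj G) R x0 | D < degree (@cadj G) u].

Fixpoint qdepth (phi : form) : nat :=
  match phi with
  | FNot p => qdepth p
  | FAnd p q => maxn (qdepth p) (qdepth q)
  | FEx _ p => (qdepth p).+1
  | _ => 0
  end.

Fixpoint color_bound (phi : form) : nat :=
  match phi with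
  | FCol i _ => i.+1
  | FNot p => color_bound p
  | FAnd p q => maxn (color_bound p) (color_bound q)
  | FEx _ p => color_bound p
  | _ => 0
  end.

Section OffHubs.
Variables (G : cgraph) (Hs : {set cvert G}).
Local Notation E := (adj_off Hs).

Lemma adj_off_sym : symmetric E.
Proof. by move=> a b; rewrite /adj_off cadj_sym [(_ \notin _) && _]andbC. Qed.

Lemma adj_off_sub : subrel E (@cadj G).
Proof. by move=> a b /and3P[]. Qed.

Lemma ball_off_hubs x t a : x \notin Hs -> a \in ball E t x -> a \notin Hs.
Proof. by move=> hx; apply: (ball_ind (P := fun a => a \notin Hs)) => // u w _ /and3P[]. Qed.

Lemma cadj_ball_out x l h a a' : x \notin Hs -> l < h ->
  a \in ball E l x -> a' \notin ball E h x -> a' \notin Hs -> cadj a a' = false.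
Proof.
move=> hx lh ha ha' hH; apply/negP => hc.
have he : E a a' by rewrite /adj_off hc (ball_off_hubs hx ha) hH.
by move: ha'; rewrite (ball_mono lh (ball_step ha he)).
Qed.

End OffHubs.

Record ball_iso (G : cgraph) (Hs : {set cvert G}) (rad ncol : nat) (x y : cvert G)
    (s s' : cvert G -> cvert G) : Prop := BallIso {
  iso_ball : forall a, a \in ball (adj_off Hs) rad x -> s a \in ball (adj_off Hs) rad y;
  iso_cancel : {in ball (adj_off Hs) rad x, cancel s s'};
  iso_dist : forall a t, a \in ball (adj_off Hs) rad x -> t <= rad ->
    (a \in ball (adj_off Hs) t x) = (s a \in ball (adj_off Hs) t y);
  iso_col : forall a c, a \in ball (adj_off Hs) rad x -> c < ncol ->
    ccol c a = ccol c (s a);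
  iso_hub : forall a h, a \in ball (adj_off Hs) rad x -> h \in Hs ->
    cadj a h = cadj (s a) h;
  iso_adj : {in ball (adj_off Hs) rad x &, forall a a', cadj a a' = cadj (s a) (s a')} }.

Lemma iso_ball_le (G : cgraph) Hs rad ncol (x y : cvert G) s s' l a :
  ball_iso Hs rad ncol x y s s' -> l <= rad ->
  a \in ball (adj_off Hs) l x -> s a \in ball (adj_off Hs) l y.
Proof. by move=> gi hl ha; rewrite -(iso_dist gi (ball_mono hl ha) hl). Qed.

Lemma iso_cadj_out (G : cgraph) Hs rad ncol (x y : cvert G) s s' l h a a' :
  ball_iso Hs rad ncol x y s s' -> x \notin Hs -> y \notin Hs -> l < h -> h <= rad ->
  a \in ball (adj_off Hs) l x -> a' \notin ball (adj_off Hs) h x ->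
  a' \notin ball (adj_off Hs) h y -> cadj (s a) a' = cadj a a'.
Proof.
move=> gi hx hy lh hr ha o1 o2; have hl : l <= rad by lia.
case hH : (a' \in Hs); first by rewrite (iso_hub gi (ball_mono hl ha) hH).
rewrite (cadj_ball_out hy lh (iso_ball_le gi hl ha) o2 (negbT hH)).
by rewrite (cadj_ball_out hx lh ha o1 (negbT hH)).
Qed.

Section Swap.
Variables (G : cgraph) (Hs : {set cvert G}) (rm CM : nat) (x1 x2 : cvert G).
Variables sg sg' : cvert G -> cvert G.
Hypotheses (hx1 : x1 \notin Hs) (hx2 : x2 \notin Hs).
(* Makes the two rm-balls disjoint and non-adjacent. *)
Hypothesis far : x2 \notin ball (adj_off Hs) (rm + rm).+1 x1.
Hypotheses (g12 : ball_iso Hs rm CM x1 x2 sg sg') (g21 : ball_iso Hs rm CM x2 x1 sg' sg).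
Local Notation B t x := (ball (adj_off Hs) t x).

Lemma balls_disjoint s1 s2 a : s1 + s2 <= (rm + rm).+1 ->
  a \in B s1 x1 -> a \in B s2 x2 -> False.
Proof.
move=> hs h1 h2; move: far; rewrite (ball_mono hs (ball_trans h1 _)) //.
exact: ball_sym (@adj_off_sym G Hs) h2.
Qed.

Lemma cadj_balls l a a' : l <= rm -> a \in B l x1 -> a' \in B l x2 -> cadj a a' = false.
Proof.
move=> hl h1 h2; apply/negP => hc.
have he : adj_off Hs a a' by rewrite /adj_off hc (ball_off_hubs hx1 h1) (ball_off_hubs hx2 h2).
by apply: (balls_disjoint _ (ball_step h1 he) h2); lia.
Qed.

Definition swap l a :=
  if a \in B l x1 then sg a else if a \in B l x2 then sg' a else a.

Definition safe l h a :=
  settled (fun s => a \in B s x1) l h && settled (fun s => a \in B s x2) l h.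

Lemma swap_in1 l a : a \in B l x1 -> swap l a = sg a.
Proof. by rewrite /swap => ->. Qed.

Lemma swap_in2 l a : l <= rm -> a \in B l x2 -> swap l a = sg' a.
Proof.
move=> hl h2; rewrite /swap h2; case: ifP => // h1.
by case: (balls_disjoint _ h1 h2); lia.
Qed.

Lemma swap_out l a : a \notin B l x1 -> a \notin B l x2 -> swap l a = a.
Proof. by rewrite /swap => /negbTE-> /negbTE->. Qed.

Lemma swapK l : l <= rm -> involutive (swap l).
Proof.
move=> hl a; case h1 : (a \in B l x1).
  rewrite (swap_in1 h1) (swap_in2 hl (iso_ball_le g12 hl h1)).
  exact: (iso_cancel g12 (ball_mono hl h1)).
case h2 : (a \in B l x2).
  rewrite (swap_in2 hl h2) (swap_in1 (iso_ball_le g21 hl h2)).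
  exact: (iso_cancel g21 (ball_mono hl h2)).
by rewrite !swap_out ?h1 ?h2.
Qed.

Lemma swap_col l a c : l <= rm -> c < CM -> ccol c (swap l a) = ccol c a.
Proof.
move=> hl hc; case h1 : (a \in B l x1).
  by rewrite swap_in1 // (iso_col g12 (ball_mono hl h1) hc).
case h2 : (a \in B l x2).
  by rewrite swap_in2 // (iso_col g21 (ball_mono hl h2) hc).
by rewrite !swap_out ?h1 ?h2.
Qed.

Lemma safeP l h a : safe l h a ->
  [\/ a \in B l x1, a \in B l x2 | (a \notin B h x1) && (a \notin B h x2)].
Proof.
case/andP => /orP[h1|o1] /orP[h2|o2]; [exact: Or31 | exact: Or31 | exact: Or32 |].
by apply: Or33; rewrite o1 o2.
Qed.

Lemma swap_far l h a : l <= h -> a \notin B h x1 -> a \notin B h x2 -> swap l a = a.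
Proof. by move=> lh o1 o2; apply: swap_out; apply: contra (ball_mono lh) _. Qed.

Lemma safe_swap l h a : l < h -> h <= rm -> safe l h a -> safe l h (swap l a).
Proof.
move=> lh hr hs; have hl : l <= rm by lia.
case/safeP: hs => [h1|h2|/andP[o1 o2]].
- have h1' := iso_ball_le g12 hl h1.
  rewrite swap_in1 // /safe /settled h1' /= andbT; apply/orP; right; apply/negP => h1''.
  by apply: (balls_disjoint _ h1'' h1'); lia.
- have h2' := iso_ball_le g21 hl h2.
  rewrite swap_in2 // /safe /settled h2' /=; apply/orP; right; apply/negP => h2''.
  by apply: (balls_disjoint _ h2' h2''); lia.
- by rewrite (swap_far (ltnW lh) o1 o2) /safe /settled o1 o2 !orbT.
Qed.

Lemma swap_cadj l h a a' : l < h -> h <= rm -> safe l h a -> safe l h a' ->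
  cadj (swap l a) (swap l a') = cadj a a'.
Proof.
move=> lh hr hs hs'; have hl : l <= rm by lia.
have out1 b b' : b \in B l x1 -> b' \notin B h x1 -> b' \notin B h x2 ->
    cadj (sg b) b' = cadj b b'.
  by move=> hb o1 o2; apply: (iso_cadj_out g12 hx1 hx2 lh hr hb o1 o2).
have out2 b b' : b \in B l x2 -> b' \notin B h x1 -> b' \notin B h x2 ->
    cadj (sg' b) b' = cadj b b'.
  by move=> hb o1 o2; apply: (iso_cadj_out g21 hx2 hx1 lh hr hb o2 o1).
have cross b b' : b \in B l x1 -> b' \in B l x2 -> cadj (sg b) (sg' b') = cadj b b'.
  move=> h1 h2; rewrite (cadj_balls hl h1 h2) cadj_sym.
  exact: cadj_balls hl (iso_ball_le g21 hl h2) (iso_ball_le g12 hl h1).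
case/safeP: hs => [h1|h2|/andP[o1 o2]]; case/safeP: hs' => [h1'|h2'|/andP[o1' o2']];
  rewrite ?(swap_in1 h1) ?(swap_in1 h1') ?(swap_in2 hl h2) ?(swap_in2 hl h2');
  rewrite ?(swap_far (ltnW lh) o1 o2) ?(swap_far (ltnW lh) o1' o2').
- by rewrite -(iso_adj g12 (ball_mono hl h1) (ball_mono hl h1')).
- exact: cross.
- exact: out1.
- by rewrite cadj_sym cross // cadj_sym.
- by rewrite -(iso_adj g21 (ball_mono hl h2) (ball_mono hl h2')).
- exact: out2.
- by rewrite cadj_sym out1 // cadj_sym.
- by rewrite cadj_sym out2 // cadj_sym.
- by [].
Qed.

Lemma safe_shrink l h l' h' a : l <= l' -> l' < h' -> h' <= h -> h <= rm ->
  safe l h a -> safe l' h' a /\ swap l' a = swap l a.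
Proof.
move=> ll' lh' hh hr hs.
have [hl hl'] : l <= rm /\ l' <= rm by lia.
case/safeP: hs => [h1|h2|/andP[o1 o2]].
- have h1' := ball_mono ll' h1.
  rewrite (swap_in1 h1) (swap_in1 h1') /safe /settled h1' /=.
  split=> //; apply/orP; right; apply/negP => h2.
  by apply: (balls_disjoint _ h1 h2); lia.
- have h2' := ball_mono ll' h2.
  rewrite (swap_in2 hl h2) (swap_in2 hl' h2') /safe /settled h2' andbT.
  split=> //; apply/orP; right; apply/negP => h1.
  by apply: (balls_disjoint _ h1 h2); lia.
- have o1' : a \notin B h' x1 by apply: contra o1; apply: ball_mono.
  have o2' : a \notin B h' x2 by apply: contra o2; apply: ball_mono.
  rewrite (swap_far _ o1 o2) ?(swap_far _ o1' o2') /safe /settled ?o1' ?o2' ?orbT //; lia.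
Qed.

Lemma safe_shell l h k a : l + 3 * k <= h ->
  exists2 l', l <= l' & l' + k <= h /\ safe l' (l' + k) a.
Proof.
move=> hk; have mono x : {homo (fun s => a \in B s x) : s t / s <= t >-> s ==> t}.
  by move=> s t st; apply/implyP/ball_mono.
have := settled_pair_gap (mono x1) (mono x2) (leq_addr k l)
  (leq_addr k (l + k)) (leq_addr k (l + k + k)).
by case/or3P => hs; [exists l | exists (l + k) | exists (l + k + k)];
  first [lia | split; [lia | exact: hs]].
Qed.

Definition env_swapped l h (al be : nat -> cvert G) (vs : seq nat) :=
  {in vs, forall n, safe l h (al n) /\ be n = swap l (al n)}.

Lemma env_swapped_bind l h l' k al be x a vs :
  l <= l' -> 0 < k -> l' + k <= h -> h <= rm ->
  env_swapped l h al be [seq n <- vs | n != x] -> safe l' (l' + k) a ->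
  env_swapped l' (l' + k) (fun n => if n == x then a else al n)
    (fun n => if n == x then swap l' a else be n) vs.
Proof.
move=> ll' k0 hk hr henv ha n hn /=; case: eqP => [//|/eqP nx].
have /henv[hs ->] : n \in [seq n <- vs | n != x] by rewrite mem_filter nx.
have lk : l' < l' + k by rewrite -addn1 leq_add2l.
by have [? <-] := safe_shrink ll' lk hk hr hs.
Qed.

Lemma sat_swap phi l h al be : h <= rm -> 3 ^ qdepth phi <= h - l ->
  color_bound phi <= CM -> env_swapped l h al be (fv phi) -> sat al phi = sat be phi.
Proof.
have k0 p : 0 < 3 ^ qdepth p by rewrite expn_gt0.
have shell_gt0 p m n : 3 ^ qdepth p <= n - m -> m < n.
  by move=> hq; rewrite -subn_gt0 (leq_trans (k0 p) hq).
elim: phi l h al be => [x y|x y|i x|p IH|p IHp q IHq|x p IH] l h al be hr hq hc henv /=;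
  have lh := shell_gt0 _ _ _ hq.
- have [_ ->] := henv x (mem_head _ _).
  have /henv[_ ->] : y \in fv (FEq x y) by rewrite !inE eqxx orbT.
  by rewrite (inj_eq (inv_inj (swapK _))) //; lia.
- have [sx ->] := henv x (mem_head _ _).
  have /henv[sy ->] : y \in fv (FAdj x y) by rewrite !inE eqxx orbT.
  by rewrite (swap_cadj lh hr sx sy).
- have [_ ->] := henv x (mem_head _ _).
  by rewrite swap_col //; lia.
- by rewrite (IH l h al be).
- rewrite /= !geq_max in hc; case/andP: hc => hcp hcq.
  have [hqp hqq] : 3 ^ qdepth p <= h - l /\ 3 ^ qdepth q <= h - l.
    by split; apply: leq_trans hq; rewrite leq_pexp2l // leq_max leqnn ?orbT.
  rewrite (IHp l h al be) ?(IHq l h al be) // => n hn; apply: henv;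
    by rewrite mem_cat hn ?orbT.
- rewrite /= expnS in hq hc; set k := 3 ^ qdepth p in hq.
  have hk : l + 3 * k <= h by lia.
  apply/existsP/existsP => [[a Ha]|[b Hb]].
  + have [l' ll' [hl'k sa]] := safe_shell a hk.
    have henv' := env_swapped_bind ll' (k0 p) hl'k hr henv sa.
    by exists (swap l' a); rewrite -(IH l' (l' + k) _ _ _ _ _ henv') ?addKn //; lia.
  + have [l' ll' [hl'k sb]] := safe_shell b hk.
    have sa : safe l' (l' + k) (swap l' b) by apply: safe_swap sb; lia.
    have henv' := env_swapped_bind ll' (k0 p) hl'k hr henv sa.
    rewrite swapK in henv'; last by lia.
    by exists (swap l' b); rewrite (IH l' (l' + k) _ _ _ _ _ henv') ?addKn //; lia.
Qed.

End Swap.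

Section Code.
Variables (G : cgraph) (Hs : {set cvert G}) (rad ncol N F : nat).
Local Notation B x := (ball (adj_off Hs) rad x).

Definition ball_seq x := enum (B x).

(* The type of the ball around x, read off along its enumeration [ball_seq x]. *)
Definition code_type : finType :=
  ('I_N.+1 * {ffun 'I_N * 'I_N -> bool} * {ffun 'I_N * 'I_ncol -> bool}
   * {ffun 'I_N * 'I_F -> bool} * {ffun 'I_N * 'I_rad.+1 -> bool})%type.

Definition ball_code x : code_type :=
  let s := ball_seq x in
  (inord (size s),
   [ffun ij : 'I_N * 'I_N => cadj (nth x s ij.1) (nth x s ij.2)],
   [ffun ic : 'I_N * 'I_ncol => ccol ic.2 (nth x s ic.1)],
   [ffun ih : 'I_N * 'I_F => cadj (nth x s ih.1) (nth x (enum Hs) ih.2)],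
   [ffun it : 'I_N * 'I_rad.+1 => nth x s it.1 \in ball (adj_off Hs) it.2 x]).

Definition code_map x y a := nth y (ball_seq y) (index a (ball_seq x)).

Lemma code_ball_iso x y : #|B x| <= N -> #|B y| <= N -> #|Hs| <= F ->
  ball_code x = ball_code y -> ball_iso Hs rad ncol x y (code_map x y) (code_map y x).
Proof.
move=> cx cy hF; rewrite /ball_code => -[e0 e1 e2 e3 e4].
set s1 := ball_seq x in e0 e1 e2 e3 e4; set s2 := ball_seq y in e0 e1 e2 e3 e4.
have [sz1 sz2] : size s1 = #|B x| /\ size s2 = #|B y| by rewrite !cardE.
have sz : size s1 = size s2 by move/(congr1 val): e0; rewrite /= !inordK // ?sz1 ?sz2 ltnS.
have idx a : a \in B x ->
    [/\ index a s1 < size s1, index a s1 < N & nth x s1 (index a s1) = a].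
  move=> ha; have hs : a \in s1 by rewrite mem_enum.
  by rewrite index_mem nth_index //; split=> //; rewrite (leq_trans _ cx) // -sz1 index_mem.
have mapE a : code_map x y a = nth y s2 (index a s1) by [].
split.
- move=> a /idx[hi _ _]; rewrite mapE.
  have : nth y s2 (index a s1) \in s2 by rewrite mem_nth // -sz.
  by rewrite /s2 /ball_seq mem_enum.
- move=> a /idx[hi _ ha].
  by rewrite /code_map -/s1 -/s2 index_uniq ?enum_uniq -?sz.
- move=> a t /idx[_ hN ha] ht.
  move/ffunP/(_ (Ordinal hN, Ordinal (ht : t < rad.+1))): e4.
  by rewrite !ffunE /= ha mapE.
- move=> a c /idx[_ hN ha] hc.
  move/ffunP/(_ (Ordinal hN, Ordinal hc)): e2.
  by rewrite !ffunE /= ha mapE.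
- move=> a h /idx[_ hN ha] hh.
  have hk : index h (enum Hs) < F by rewrite (leq_trans _ hF) // cardE index_mem mem_enum.
  move/ffunP/(_ (Ordinal hN, Ordinal hk)): e3.
  by rewrite !ffunE /= ha mapE !nth_index ?mem_enum.
- move=> a a' /idx[_ hN ha] /idx[_ hN' ha'].
  move/ffunP/(_ (Ordinal hN, Ordinal hN')): e1.
  by rewrite !ffunE /= ha ha' !mapE.
Qed.

End Code.

Lemma leq_card_inj (A B : finType) (f : A -> B) (Y : {set A}) (Z : {set B}) :
  injective f -> {in Y, forall y, f y \in Z} -> #|Y| <= #|Z|.
Proof.
move=> fi hY; rewrite -(card_imset Y fi); apply: subset_leq_card.
by apply/subsetP => _ /imsetP[y hy ->]; apply: hY.
Qed.

Lemma pigeonhole_fiber (A K : finType) (f : A -> K) (Y : {set A}) n :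
  #|K| * n < #|Y| -> exists c, n < #|[set y in Y | f y == c]|.
Proof.
move=> hY; apply/existsP; apply: contraLR hY => /existsPn hc; rewrite -leqNgt.
have hsub : Y \subset \bigcup_(c in K) [set y in Y | f y == c].
  by apply/subsetP => y hy; apply/bigcupP; exists (f y); rewrite // inE hy eqxx.
apply: leq_trans (subset_leq_card hsub) (leq_trans (leq_card_bigcup _ _) _).
by rewrite -sum_nat_const; apply: leq_sum => c _; rewrite leqNgt hc.
Qed.

Lemma card_ball_off_hubs (G : cgraph) R D (x0 x : cvert G) s t :
  s + t <= R -> x \in ball (@cadj G) s x0 -> x \notin hubs R D x0 ->
  #|ball (adj_off (hubs R D x0)) t x| <= D.+1 ^ t.
Proof.
move=> hst hx hxH; apply: card_ball_le => y hy.
have yR : y \in ball (@cadj G) R x0.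
  exact: ball_mono hst (ball_trans hx (sub_rel_ball (@adj_off_sub G _) hy)).
have : y \notin hubs R D x0 by apply: ball_off_hubs hy.
rewrite inE yR /= -leqNgt; apply: leq_trans; apply: subset_leq_card.
by apply/subsetP => z; rewrite !inE => /and3P[].
Qed.

Lemma interp_ball_sub psi delta b (G : cgraph) r (v u : ivert delta G) :
  has_range psi b -> u \in ball (@iadj psi delta G) r v ->
  val u \in ball (@cadj G) (r * b) (val v).
Proof.
move=> hb; elim: r u => [|r IH] u; first by rewrite !ball0 => /eqP->.
case/ballSP => [/IH /ball_mono -> //|[w /IH hw /andP[_ hwu]]].
  by rewrite leq_mul2r leqnSn orbT.
have hwu' : val u \in ball (@cadj G) b (val w).
  by apply: ball_sym (@cadj_sym G) _; apply: contraTT hwu; apply: hb.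
by rewrite mulSn addnC; apply: ball_trans hw hwu'.
Qed.

Definition loc_radius (psi : form) := 3 ^ qdepth psi.
Definition sep_radius (psi : form) := (loc_radius psi + loc_radius psi).+1.
Definition ball_bound (psi : form) D := D.+1 ^ sep_radius psi.
Definition code_count (psi : form) D F :=
  #|code_type (loc_radius psi) (color_bound psi) (ball_bound psi D) F|.

Lemma psi_at_far_eq psi (G : cgraph) (Hs : {set cvert G}) (x1 x2 w : cvert G) s s' :
  all (fun n => n < 2) (fv psi) -> x1 \notin Hs -> x2 \notin Hs ->
  x2 \notin ball (adj_off Hs) (sep_radius psi) x1 ->
  ball_iso Hs (loc_radius psi) (color_bound psi) x1 x2 s s' ->
  ball_iso Hs (loc_radius psi) (color_bound psi) x2 x1 s' s ->
  w \notin ball (adj_off Hs) (loc_radius psi) x1 ->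
  w \notin ball (adj_off Hs) (loc_radius psi) x2 ->
  psi_at psi x1 w = psi_at psi x2 w.
Proof.
set rm := loc_radius psi => fv2 hx1 hx2 far g12 g21 o1 o2.
have c1 : x1 \in ball (adj_off Hs) 0 x1 := ball_center _ _ _.
have o12 : x1 \notin ball (adj_off Hs) rm x2.
  apply: contra far => /(ball_sym (@adj_off_sym G Hs)); apply: ball_mono.
  by rewrite /sep_radius; lia.
apply: (sat_swap hx1 hx2 far g12 g21 (l := 0) (h := rm)); rewrite ?subn0 //.
move=> n /(allP fv2); case: n => [|[|//]] _ /=.
- rewrite /safe /settled c1 o12 orbT (swap_in1 _ _ _ c1); split=> //.
  by apply/esym/eqP; rewrite -(ball0 (adj_off Hs)) -(iso_dist g12 (ball_mono (leq0n _) c1)).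
- by rewrite /safe /settled o1 o2 !orbT (swap_far _ _ (leq0n _) o1 o2).
Qed.

Lemma near_twins_of_same_code psi delta (G : cgraph) (S : {set ivert delta G})
    (Hs : {set cvert G}) N F (u1 u2 : ivert delta G) :
  all (fun n => n < 2) (fv psi) -> val u1 \notin Hs -> val u2 \notin Hs ->
  val u2 \notin ball (adj_off Hs) (sep_radius psi) (val u1) ->
  #|ball (adj_off Hs) (loc_radius psi) (val u1)| <= N ->
  #|ball (adj_off Hs) (loc_radius psi) (val u2)| <= N -> #|Hs| <= F ->
  ball_code Hs (loc_radius psi) (color_bound psi) N F (val u1) =
    ball_code Hs (loc_radius psi) (color_bound psi) N F (val u2) ->
  near_twins (@iadj psi delta G) S (N + N) u1 u2.
Proof.
set rm := loc_radius psi; set B1 := ball (adj_off Hs) rm (val u1).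
set B2 := ball (adj_off Hs) rm (val u2).
move=> fv2 h1 h2 far c1 c2 hF hc.
have g12 := code_ball_iso c1 c2 hF hc; have g21 := code_ball_iso c2 c1 hF (esym hc).
have same (w : ivert delta G) : val w \notin B1 -> val w \notin B2 ->
    @iadj psi delta G u1 w = @iadj psi delta G u2 w.
  move=> o1 o2; rewrite /iadj (psi_at_far_eq fv2 h1 h2 far g12 g21 o1 o2).
  have -> : val u1 != val w by apply: contraNneq o1 => <-; apply: ball_center.
  by have -> : val u2 != val w by apply: contraNneq o2 => <-; apply: ball_center.
apply: leq_trans (leq_trans (leq_card_setU B1 B2) (leq_add c1 c2)).
apply: (leq_card_inj val_inj) => w; apply: contraTT; rewrite inE negb_or => /andP[o1 o2].
by rewrite !inE (same w o1 o2) !andNb.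
Qed.

Lemma near_covered_interp_ball psi delta b (G : cgraph) r (v : ivert delta G) D F :
  all (fun n => n < 2) (fv psi) -> has_range psi b ->
  #|hubs (r * b + sep_radius psi) D (val v)| <= F ->
  near_covered (@iadj psi delta G) (ball (@iadj psi delta G) r v)
    (ball_bound psi D + ball_bound psi D) (F + code_count psi D F * ball_bound psi D).
Proof.
set Hs := hubs _ D _; set N := ball_bound psi D; set rm := loc_radius psi.
move=> fv2 hb hF X hXS hX.
have hN u t : u \in ball (@iadj psi delta G) r v -> val u \notin Hs -> t <= sep_radius psi ->
    #|ball (adj_off Hs) t (val u)| <= N.
  move=> hu hH ht.
  have hst : r * b + t <= r * b + sep_radius psi by rewrite leq_add2l.
  apply: leq_trans (card_ball_off_hubs hst (interp_ball_sub hb hu) hH) _.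
  by rewrite /N /ball_bound leq_pexp2l.
have hrm : rm <= sep_radius psi by rewrite /sep_radius; lia.
pose P := [set u : ivert delta G | val u \in Hs].
rewrite -(cardsID P X) leq_add //.
  by apply: leq_trans hF; apply: (leq_card_inj val_inj) => u; rewrite !inE => /andP[].
pose code (u : ivert delta G) := ball_code Hs rm (color_bound psi) N F (val u).
rewrite leqNgt; apply/negP => /(pigeonhole_fiber code)[c].
set cl := [set u in _ | _] => hc.
have clP u : u \in cl ->
    [/\ u \in X, u \in ball (@iadj psi delta G) r v, val u \notin Hs & code u = c].
  by rewrite !inE => /andP[/andP[hP hu] /eqP hcu]; split=> //; apply: (subsetP hXS).
have [u1 /clP[hX1 hS1 hH1 hc1]] : exists u, u \in cl by apply/set0Pn; rewrite -card_gt0; lia.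
have [u2 /clP[hX2 hS2 hH2 hc2] far] :
    exists2 u, u \in cl & val u \notin ball (adj_off Hs) (sep_radius psi) (val u1).
  apply/exists_inP; apply: contraLR hc => /exists_inPn hcl.
  rewrite -leqNgt (leq_trans _ (hN _ _ hS1 hH1 (leqnn _))) //.
  by apply: (leq_card_inj val_inj) => u /hcl /negPn.
have ne12 : u1 != u2 by apply: contraNneq far => <-; apply: ball_center.
apply: (negP (hX u1 u2 hX1 hX2 ne12)).
have [c1 c2] := (hN _ _ hS1 hH1 hrm, hN _ _ hS2 hH2 hrm).
exact: near_twins_of_same_code fv2 hH1 hH2 far c1 c2 hF (etrans hc1 (esym hc2)).
Qed.

Theorem lemma5p9 (psi delta : form) (C : cgraph -> Prop) :
  is_interpretation psi delta ->
  (exists b : nat, has_range psi b) ->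
  loc_almost_bounded_degree C ->
  loc_almost_near_covered (interp_class psi delta C).
Proof.
move=> [fv2 _ _ _] [b hb] [f [d hfd]].
pose R r := r * b + sep_radius psi.
exists (fun r => ball_bound psi (d (R r)) + ball_bound psi (d (R r))).
exists (fun r => f (R r) + code_count psi (d (R r)) (f (R r)) * ball_bound psi (d (R r))).
move=> r _ [G [CG ->]] v.
exact: near_covered_interp_ball fv2 hb (hfd _ _ CG _).
Qed.
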